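(* Let $\ell\ge1$, $N=2^\ell$, let ${\mathbf x}_0,\dots,{\mathbf x}_{\omega-1}\in\mathbb{F}_2^\ell$ be distinct, and let $D=P_{{\mathbf x}_0}+\cdots+P_{{\mathbf x}_{\omega-1}}$ (the dyadic matrix whose signature has support $\{{\mathbf x}_0,\dots,{\mathbf x}_{\omega-1}\}$). Let $R$ be the number of ordered pairs $\big((u,v),(u',v')\big)$ with $u,v,u',v'\in\{0,\dots,\omega-1\}$, $u\ne v$, $u'\ne v'$, $u\ne u'$, $v\ne v'$ and ${\mathbf x}_u+{\mathbf x}_v={\mathbf x}_{u'}+{\mathbf x}_{v'}$; write $R=R^{c}+R^{nc}$, where $R^{c}$ counts those pairs with $u=v'$ and $v=u'$, and $R^{nc}$ the remaining ones. Then the number of $4$-cycles in the Tanner graph of $D$ is $$\mathcal{N}_4=\frac{2^\ell}{4}\left(R^{c}+R^{nc}\right).$$ In particular, if $\omega\ge2$ the Tanner graph of $D$ has girth $4$.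
   Context: Rows and columns of $N\times N$ binary matrices are indexed by $\mathbb{F}_2^\ell$ via ${\mathbf x}=(x_1,\dots,x_\ell)\leftrightarrow 1+\sum_i x_i2^{i-1}$. For ${\mathbf a}\in\mathbb{F}_2^\ell$, $P_{\mathbf a}$ is the $N\times N$ binary matrix with $(P_{\mathbf a})_{{\mathbf x},{\mathbf y}}=1$ iff ${\mathbf y}={\mathbf x}+{\mathbf a}$ (the dyadic permutation matrix with signature the indicator vector of ${\mathbf a}$). The Tanner graph of a binary matrix $H$ is the bipartite graph with one check node per row, one variable node per column, and an edge between row $r$ and column $c$ iff $H_{r,c}=1$. A $k$-cycle is a closed walk with $k$ edges and distinct vertices and edges; the girth is the length of a shortest cycle. *)

From mathcomp Require Import all_boot all_order all_algebra.
Set Implicit Arguments. Unset Strict Implicit. Unset Printing Implicit Defensive.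
Import GRing.Theory.
Local Open Scope ring_scope.

(* Binary matrices with rows/columns indexed by F_2^l = 'rV['F_2]_l
   (the integer labelling x <-> 1 + sum x_i 2^(i-1) is a mere relabelling). *)

Definition dyadicP (l : nat) (a : 'rV['F_2]_l) (x y : 'rV['F_2]_l) : 'F_2 :=
  (y == x + a)%:R.

Definition dyadicD (l w : nat) (xs : 'I_w -> 'rV['F_2]_l)
  (x y : 'rV['F_2]_l) : 'F_2 := \sum_(u < w) dyadicP (xs u) x y.

(* Tanner graph of a binary matrix H : rows (inl = check nodes),
   columns (inr = variable nodes); edge r -- c iff H r c = 1. *)
Definition tanner_adj (T : finType) (H : T -> T -> 'F_2) : rel (T + T) :=
  fun a b => match a, b with
             | inl r, inr c => H r c != 0
             | inr c, inl r => H r c != 0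
             | _, _ => false
             end.

Definition is_kcycle (V : finType) (e : rel V) (k : nat) (p : {ffun 'I_k -> V}) : bool :=
  [&& (0 < k)%N,
      injectiveb (fun i => p i),
      [forall i : 'I_k, e (p i) (p (ordS i))] &
      injectiveb (fun i : 'I_k => [set p i; p (ordS i)])].

Definition cycle_edges (V : finType) (k : nat) (p : {ffun 'I_k -> V}) : {set {set V}} :=
  [set [set p i; p (ordS i)] | i : 'I_k].

(* Number of k-cycles (counted as subgraphs, i.e. by their edge sets) *)
Definition num_cycles (V : finType) (e : rel V) (k : nat) : nat :=
  #|[set cycle_edges p | p in [pred p : {ffun 'I_k -> V} | is_kcycle e p]]|.

Definition girth_is (V : finType) (e : rel V) (g : nat) : Prop :=
  (exists p : {ffun 'I_g -> V}, is_kcycle e p) /\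
  (forall k, (k < g)%N -> forall p : {ffun 'I_k -> V}, ~~ is_kcycle e p).

Definition Rset (l w : nat) (xs : 'I_w -> 'rV['F_2]_l) :
  {set ('I_w * 'I_w) * ('I_w * 'I_w)} :=
  [set q | [&& q.1.1 != q.1.2, q.2.1 != q.2.2, q.1.1 != q.2.1, q.1.2 != q.2.2 &
             xs q.1.1 + xs q.1.2 == xs q.2.1 + xs q.2.2]].

Definition Rcset (l w : nat) (xs : 'I_w -> 'rV['F_2]_l) :=
  [set q in Rset xs | (q.1.1 == q.2.2) && (q.1.2 == q.2.1)].

Definition Rncset (l w : nat) (xs : 'I_w -> 'rV['F_2]_l) :=
  Rset xs :\: Rcset xs.

(* Every 4-cycle of a graph is traced by exactly 8 closed walks (4 starting
   points, 2 directions), so closed 4-walks with distinct vertices count the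
   4-cycles 8 times.  D is symmetric, so exchanging check and variable nodes is
   an automorphism of its Tanner graph and half of these walks start at a check
   node x.  Such a walk is x, x + x_u, x + x_u + x_v, x + x_u', and it closes
   through an edge labelled v' exactly when x_u + x_v = x_u' + x_v'; its
   vertices are distinct exactly when u <> v and u <> u'.  This identifies the
   walks from check nodes with F_2^l x R, whence 8 N_4 = 2 * 2^l * R.  For the
   girth: a Tanner graph is bipartite, so it has no odd cycles, no graph has a
   2-cycle, and the pair ((0,1),(1,0)) of R^c yields a 4-cycle. *)

From mathcomp Require Import all_boot all_order all_algebra.
From mathcomp Require Import ring.
Set Implicit Arguments. Unset Strict Implicit. Unset Printing Implicit Defensive.
Import GRing.Theory.
Local Open Scope ring_scope.

Lemma eq_set2 (V : finType) (a b c d : V) :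
  [set a; b] = [set c; d] -> (a = c /\ b = d) \/ (a = d /\ b = c).
Proof.
move=> E.
have /set2P ha : a \in [set c; d] by rewrite -E set21.
have /set2P hb : b \in [set c; d] by rewrite -E set22.
have /set2P hc : c \in [set a; b] by rewrite E set21.
have /set2P hd : d \in [set a; b] by rewrite E set22.
by case: ha hb hc hd => ha [] hb [] hc [] hd; subst; auto.
Qed.

Lemma ordSS_neq n (i : 'I_n.+3) : ordS (ordS i) != i.
Proof.
apply/eqP=> E.
have : (1 + 1 : 'Z_n.+3) = 0 by apply: (@addrI _ i); rewrite addrA !(@add_Zp_1 n.+3) E addr0.
by move/(congr1 val); rewrite /= modn_small.
Qed.

Definition o0 : 'I_4 := ord0.
Definition o1 : 'I_4 := Ordinal (isT : (1 < 4)%N).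
Definition o2 : 'I_4 := Ordinal (isT : (2 < 4)%N).
Definition o3 : 'I_4 := Ordinal (isT : (3 < 4)%N).

Lemma ord4P (i : 'I_4) : [\/ i = o0, i = o1, i = o2 | i = o3].
Proof.
case: i => -[|[|[|[|//]]]] lti;
  [constructor 1 | constructor 2 | constructor 3 | constructor 4]; exact: val_inj.
Qed.

Lemma ordS4 : [/\ ordS o0 = o1, ordS o1 = o2, ordS o2 = o3 & ordS o3 = o0].
Proof. by split; apply: val_inj. Qed.

Definition c4adj (i j : 'I_4) := (j == ordS i) || (i == ordS j).

(* [(r, false)] is the rotation [i |-> r + i] and [(r, true)] the reflection
   [i |-> r - i] of Z/4: the 8 symmetries of the cycle 0 - 1 - 2 - 3 - 0. *)
Definition c4sym (rb : 'I_4 * bool) (i : 'I_4) : 'I_4 :=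
  if rb.2 then rb.1 - i else rb.1 + i.

Lemma c4sym_adj rb i : c4adj (c4sym rb i) (c4sym rb (ordS i)).
Proof.
by case: rb => r []; rewrite /c4adj /c4sym /= -!(@add_Zp_1 4) ?opprD ?addrA ?subrK eqxx ?orbT.
Qed.

Lemma c4sym_inj rb : injective (c4sym rb).
Proof. by case: rb => r [] i j /=; [move/addrI/oppr_inj | move/addrI]. Qed.

Lemma c4sym_inj2 : injective (fun rb => (c4sym rb o0, c4sym rb o1)).
Proof.
move=> [r b] [r' b'] [/eqP e0 /eqP e1]; apply/eqP; move: e0 e1.
by move: r r' b b'; do 2!case=> -[|[|[|[|//]]]] ?; do 2!case.
Qed.

(* By exhaustion over the values of s; the first edge (s 0, s 1) determines
   the symmetry. *)
Lemma c4adj_walk_sym (s : 'I_4 -> 'I_4) :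
  injective s -> (forall i, c4adj (s i) (s (ordS i))) ->
  s =1 c4sym (s o0, s o1 != ordS (s o0)).
Proof.
move=> s_inj s_adj.
set rb := (s o0, _).
suff : [&& s o0 == c4sym rb o0, s o1 == c4sym rb o1,
          s o2 == c4sym rb o2 & s o3 == c4sym rb o3].
  by case/and4P=> /eqP ? /eqP ? /eqP ? /eqP ? i; case: (ord4P i) => ->.
have [S0 S1 S2 S3] := ordS4.
have := s_adj o0; have := s_adj o1; have := s_adj o2; have := s_adj o3.
have : s o0 != s o2 by rewrite (inj_eq s_inj).
have : s o1 != s o3 by rewrite (inj_eq s_inj).
rewrite /rb S0 S1 S2 S3; move: (s o0) (s o1) (s o2) (s o3).
by do 4!case=> -[|[|[|[|//]]]] ?.
Qed.

Section Cycles.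
Variables (V : finType) (e : rel V).

Lemma kcycle_edges_inj k (p : {ffun 'I_k.+3 -> V}) : injective p ->
  injective (fun i => [set p i; p (ordS i)]).
Proof.
move=> ip i j /eq_set2 [[/ip -> //] | [/ip eij /ip eji]].
by have /eqP[] := ordSS_neq i; rewrite eji -eij.
Qed.

Lemma is_kcycleE k (p : {ffun 'I_k.+3 -> V}) :
  is_kcycle e p = injectiveb p && [forall i, e (p i) (p (ordS i))].
Proof.
rewrite /is_kcycle /=; case: (injectiveP p) => //= /kcycle_edges_inj ep.
by rewrite (introT (injectiveP _) ep) andbT.
Qed.

Lemma card_cycle_edges k (p : {ffun 'I_k.+3 -> V}) :
  injective p -> #|cycle_edges p| = k.+3.
Proof. by move=> /kcycle_edges_inj ep; rewrite card_imset ?card_ord. Qed.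

Lemma is_kcycle_map k (f : V -> V) (p : {ffun 'I_k.+3 -> V}) :
  injective f -> {mono f : a b / e a b} ->
  is_kcycle e [ffun i => f (p i)] = is_kcycle e p.
Proof.
move=> f_inj f_mono; rewrite !is_kcycleE; congr andb.
  apply/injectiveP/injectiveP => [fp_inj i j pij | p_inj i j].
    by apply: fp_inj; rewrite !ffunE pij.
  by rewrite !ffunE => /f_inj/p_inj.
by apply: eq_forallb => i; rewrite !ffunE f_mono.
Qed.

Lemma no_2cycle (p : {ffun 'I_2 -> V}) : ~~ is_kcycle e p.
Proof.
apply/negP => /and4P[_ _ _ /injectiveP edges_inj].
have S : ordS (ordS ord0) = ord0 :> 'I_2 by apply: val_inj.
by have := edges_inj ord0 (ordS ord0); rewrite S setUC => /(_ erefl) /(congr1 val).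
Qed.

Hypothesis e_irr : irreflexive e.

Lemma is_cycle4E (p : {ffun 'I_4 -> V}) :
  is_kcycle e p = [&& p o0 != p o2, p o1 != p o3 & [forall i, e (p i) (p (ordS i))]].
Proof.
rewrite is_kcycleE andbA; case: (forallP) => [ep | _]; rewrite ?andbF ?andbT //.
have [S0 S1 S2 S3] := ordS4.
have adj_neq i : p i != p (ordS i) by apply: contraTneq (ep i) => ->; rewrite e_irr.
apply/injectiveP/andP => [p_inj | [n02 n13] i j pij].
  by split; apply/eqP => /p_inj.
have := adj_neq o0; have := adj_neq o1; have := adj_neq o2; have := adj_neq o3.
rewrite S0 S1 S2 S3 => n30 n23 n12 n01.
have neqs : [&& p o0 != p o2, p o1 != p o3, p o0 != p o1, p o1 != p o2,
               p o2 != p o3 & p o3 != p o0] by rewrite n02 n13 n01 n12 n23 n30.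
move: pij; case: (ord4P i) => ->; case: (ord4P j) => -> // pij;
  by move: neqs; rewrite pij eqxx /= ?andbF.
Qed.

Hypothesis e_sym : symmetric e.

Definition cycles4 := [set p : {ffun 'I_4 -> V} | is_kcycle e p].

Definition c4relabel (p : {ffun 'I_4 -> V}) rb := [ffun i => p (c4sym rb i)].

Lemma cycles4_relabel p rb : p \in cycles4 ->
  c4relabel p rb \in cycles4 /\ cycle_edges (c4relabel p rb) = cycle_edges p.
Proof.
rewrite !inE !is_kcycleE => /andP[/injectiveP p_inj /forallP ep].
have q_inj : injective (c4relabel p rb) by move=> i j; rewrite !ffunE => /p_inj/c4sym_inj.
have sub : cycle_edges (c4relabel p rb) \subset cycle_edges p.
  apply/subsetP=> _ /imsetP[i _ ->]; rewrite !ffunE; apply/imsetP.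
  case/orP: (c4sym_adj rb i) => /eqP ->; first by exists (c4sym rb i).
  by exists (c4sym rb (ordS i)); rewrite // setUC.
split; last by apply/eqP; rewrite eqEcard sub !card_cycle_edges.
apply/andP; split; first exact/injectiveP.
apply/forallP=> i; rewrite !ffunE.
by case/orP: (c4sym_adj rb i) => /eqP ->; last rewrite e_sym.
Qed.

Lemma cycles4_same_edges p q : p \in cycles4 -> q \in cycles4 ->
  cycle_edges q = cycle_edges p -> exists rb, q = c4relabel p rb.
Proof.
rewrite !inE !is_kcycleE => /andP[/injectiveP p_inj _] /andP[/injectiveP q_inj _] Eqp.
have edge_q i : exists j, [set q i; q (ordS i)] = [set p j; p (ordS j)].
  have : [set q i; q (ordS i)] \in cycle_edges p by rewrite -Eqp; apply/imsetP; exists i.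
  by case/imsetP=> j _ ->; exists j.
have q_on_p i : exists j, q i = p j.
  by have [j /eq_set2 [[-> _]|[-> _]]] := edge_q i; eexists.
have [s qs] := fin_all_exists q_on_p.
have s_inj : injective s by move=> i j sij; apply: q_inj; rewrite !qs sij.
have s_adj i : c4adj (s i) (s (ordS i)).
  have [j] := edge_q i; rewrite !qs.
  by case/eq_set2 => -[/p_inj -> /p_inj ->]; rewrite /c4adj eqxx ?orbT.
exists (s o0, s o1 != ordS (s o0)); apply/ffunP => i.
by rewrite ffunE qs (c4adj_walk_sym s_inj s_adj).
Qed.

Lemma card_cycles4 : #|cycles4| = (8 * num_cycles e 4)%N.
Proof.
have -> : num_cycles e 4 = #|[set cycle_edges p | p in cycles4]|.
  apply: eq_card => E; apply/imsetP/imsetP => -[p pP ->];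
    by exists p; rewrite // !inE in pP *.
rewrite -[#|cycles4|]sum1_card (partition_big_imset (@cycle_edges V 4)) /=.
rewrite mulnC -sum_nat_const.
apply: eq_bigr => _ /imsetP[p pC ->].
have fibre : [set q in cycles4 | cycle_edges q == cycle_edges p]
           = [set c4relabel p rb | rb : 'I_4 * bool].
  apply/setP => q; rewrite inE; apply/andP/imsetP => [[qC /eqP Eqp] | [rb _ ->]].
    by have [rb ->] := cycles4_same_edges pC qC Eqp; exists rb.
  by have [-> ->] := cycles4_relabel rb pC.
rewrite sum1dep_card fibre card_imset ?card_prod ?card_ord ?card_bool //.
move: pC; rewrite inE is_kcycleE => /andP[/injectiveP p_inj _] rb rb' /ffunP E.
by apply: c4sym_inj2; have := E o0; have := E o1; rewrite !ffunE => /p_inj-> /p_inj->.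
Qed.

End Cycles.

Definition swap_sides (A : Type) (s : A + A) : A + A :=
  match s with inl a => inr a | inr a => inl a end.

Lemma swap_sidesK (A : Type) : involutive (@swap_sides A).
Proof. by case. Qed.

Section Tanner.
Variables (T : finType) (H : T -> T -> 'F_2).
Local Notation G := (tanner_adj H).

Lemma tanner_adj_sym : symmetric G.
Proof. by case=> a [] b. Qed.

Lemma tanner_adj_irr : irreflexive G.
Proof. by case. Qed.

Lemma tanner_adj_side a b : G a b -> is_inl b = ~~ is_inl a.
Proof. by case: a b => a [] b. Qed.

Lemma tanner_cycle_even k (p : {ffun 'I_k -> T + T}) : is_kcycle G p -> ~~ odd k.
Proof.
case: k p => [//|k] p.
case/and4P=> _ _ /forallP ep _.
have side i : is_inl (p (ordS i)) = ~~ is_inl (p i) := tanner_adj_side (ep i).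
have alt n (ltn : (n < k.+1)%N) : is_inl (p (Ordinal ltn)) = is_inl (p ord0) (+) odd n.
  elim: n ltn => [|n IH] ltn; first by rewrite addbF; congr (is_inl (p _)); apply: val_inj.
  have ltn' : (n < k.+1)%N := ltnW ltn.
  have -> : Ordinal ltn = ordS (Ordinal ltn') by apply: val_inj; rewrite /= modn_small.
  by rewrite side IH addbN.
have := side (Ordinal (ltnSn k)); rewrite alt.
have -> : ordS (Ordinal (ltnSn k)) = ord0 by apply: val_inj; rewrite /= modnn.
by rewrite oddS negbK; case: (is_inl (p ord0)); case: (odd k).
Qed.

Definition check_rooted := [set p : {ffun 'I_4 -> T + T} | is_inl (p o0)].

Hypothesis H_sym : forall r c, H r c = H c r.

Lemma tanner_adj_swap : {mono @swap_sides T : a b / G a b}.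
Proof. by case=> a [] b; rewrite /tanner_adj //= H_sym. Qed.

Lemma card_cycles4_tanner :
  #|cycles4 G| = (2 * #|cycles4 G :&: check_rooted|)%N.
Proof.
pose sw (p : {ffun 'I_4 -> T + T}) := [ffun i => swap_sides (p i)].
have swK : involutive sw by move=> p; apply/ffunP=> i; rewrite !ffunE swap_sidesK.
have swC p : is_kcycle G (sw p) = is_kcycle G p.
  by rewrite is_kcycle_map //; [exact: can_inj (@swap_sidesK T) | exact: tanner_adj_swap].
have var_cycles : cycles4 G :\: check_rooted
                = sw @: (cycles4 G :&: check_rooted).
  rewrite (can2_imset_pre _ swK swK); apply/setP=> p.
  by rewrite !inE swC ffunE andbC; case: (p o0).
by rewrite -(cardsID check_rooted (cycles4 G)) var_cycles card_imset
  ?mul2n ?addnn //; exact: can_inj swK.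
Qed.

End Tanner.

Lemma opprF2 m n (x : 'M['F_2]_(m, n)) : - x = x.
Proof. by apply/matrixP=> i j; rewrite mxE oppr_pchar2 // pchar_Fp. Qed.

Lemma addr_eq0F2 m n (x y : 'M['F_2]_(m, n)) : (x + y == 0) = (x == y).
Proof. by rewrite addr_eq0 opprF2. Qed.

Lemma addrKF2 m n (x y : 'M['F_2]_(m, n)) : x + y + y = x.
Proof. by rewrite -{2}[y]opprF2 addrK. Qed.

Section Dyadic.
Variables (l w : nat) (xs : 'I_w -> 'rV['F_2]_l).
Local Notation G := (tanner_adj (dyadicD xs)).

Lemma dyadicD_sym x y : dyadicD xs x y = dyadicD xs y x.
Proof.
rewrite /dyadicD; apply: eq_bigr => u _; rewrite /dyadicP.
by congr ((nat_of_bool _)%:R); apply/idP/idP => /eqP ->; rewrite addrKF2.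
Qed.

Lemma card_Rset : #|Rset xs| = (#|Rcset xs| + #|Rncset xs|)%N.
Proof.
rewrite -(cardsID (Rcset xs) (Rset xs)) (setIidPr _) //.
by apply/subsetP => q; rewrite inE => /andP[].
Qed.

Hypothesis xs_inj : injective xs.

Lemma dyadicD_neq0P x y : reflect (exists u, y = x + xs u) (dyadicD xs x y != 0).
Proof.
apply: (iffP idP) => [|[u ->]].
  rewrite /dyadicD /dyadicP.
  case: (pickP (fun u => y == x + xs u)) => [u /eqP | no_u]; first by exists u.
  by rewrite big1 ?eqxx // => u _; rewrite no_u.
rewrite /dyadicD (bigD1 u) //= /dyadicP eqxx big1 ?addr0 ?oner_eq0 // => v.
by rewrite (inj_eq (addrI x)) (inj_eq xs_inj) eq_sym => /negbTE ->.
Qed.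

Lemma dyadic_adjP r c : reflect (exists u, c = r + xs u) (G (inl r) (inr c)).
Proof. exact: (dyadicD_neq0P r c). Qed.

Lemma mem_Rset u v u' v' : xs u + xs v = xs u' + xs v' ->
  (((u, v), (u', v')) \in Rset xs) = (u != v) && (u != u').
Proof.
move=> E; rewrite inE /= E eqxx andbT.
have -> : (u' == v') = (u == v).
  rewrite -(inj_eq xs_inj u') -(inj_eq xs_inj u).
  by rewrite -[xs u' == _]addr_eq0F2 -[xs u == _]addr_eq0F2 E.
have -> : (v == v') = (u == u').
  rewrite -(inj_eq xs_inj v) -(inj_eq xs_inj u) -(inj_eq (addrI (xs u)) (xs v)) E.
  by rewrite (inj_eq (addIr _)) eq_sym.
by case: (u == v); case: (u == u').
Qed.

Lemma dyadic_adj_inl r b : G (inl r) b -> exists u, b = inr (r + xs u).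
Proof. by case: b => // c /dyadic_adjP[u ->]; exists u. Qed.

Lemma dyadic_adj_inr c b : G (inr c) b -> exists u, b = inl (c + xs u).
Proof.
case: b => // r; rewrite tanner_adj_sym => /dyadic_adjP[u ->].
by exists u; rewrite addrKF2.
Qed.

(* The closed walk x, x + x_u, x + x_u + x_v, x + x_u' on the Tanner graph;
   its last edge is labelled v' as soon as x_u + x_v = x_u' + x_v'. *)
Definition square_walk (x : 'rV['F_2]_l) (q : ('I_w * 'I_w) * ('I_w * 'I_w)) :
  {ffun 'I_4 -> 'rV['F_2]_l + 'rV['F_2]_l} :=
  [ffun i : 'I_4 => match val i with
     | 0 => inl x
     | 1 => inr (x + xs q.1.1)
     | 2 => inl (x + xs q.1.1 + xs q.1.2)
     | _ => inr (x + xs q.2.1) end].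

Lemma square_walk_cycle x q : q \in Rset xs -> square_walk x q \in cycles4 G.
Proof.
case: q => [[u v] [u' v']] qR.
have /eqP E : xs u + xs v == xs u' + xs v' by move: qR; rewrite inE => /and5P[].
move: qR; rewrite mem_Rset // => /andP[nuv nuu'].
rewrite inE (is_cycle4E (@tanner_adj_irr _ _)); apply/and3P; split.
- rewrite !ffunE /= (inj_eq inl_inj) -addrA eq_sym -[x in _ == x]addr0 (inj_eq (addrI x)).
  by rewrite addr_eq0F2 (inj_eq xs_inj).
- by rewrite !ffunE /= (inj_eq inr_inj) (inj_eq (addrI x)) (inj_eq xs_inj).
have [S0 S1 S2 S3] := ordS4.
apply/forallP => i; case: (ord4P i) => ->; rewrite ?S0 ?S1 ?S2 ?S3 !ffunE /=.
- by apply/dyadic_adjP; exists u.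
- by apply/dyadic_adjP; exists v; rewrite addrKF2.
- by apply/dyadic_adjP; exists v'; rewrite -[x + xs u + xs v]addrA E addrA addrKF2.
- by apply/dyadic_adjP; exists u'.
Qed.

Lemma check_cycle4_square_walk p : p \in cycles4 G -> is_inl (p o0) ->
  exists2 xq, xq.2 \in Rset xs & p = square_walk xq.1 xq.2.
Proof.
rewrite inE (is_cycle4E (@tanner_adj_irr _ _)) => /and3P[n02 n13 /forallP ep].
case E0: (p o0) => [x|] // _.
have [S0 S1 S2 S3] := ordS4.
have := ep o0; rewrite S0 E0 => /dyadic_adj_inl[u E1].
have := ep o1; rewrite S1 E1 => /dyadic_adj_inr[v E2].
have := ep o2; rewrite S2 E2 => /dyadic_adj_inl[v' E3].
have := ep o3; rewrite S3 E3 E0 => /dyadic_adj_inr[u' [Ex]].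
have E : xs u + xs v = xs u' + xs v'.
  apply/eqP; rewrite [xs u' + _]addrC -addr_eq0F2 addrA.
  by rewrite -(inj_eq (addrI x)) !addrA -Ex addr0.
have {E3} E3 : p o3 = inr (x + xs u') by rewrite E3 {2}Ex addrKF2.
exists (x, ((u, v), (u', v'))); rewrite /= ?mem_Rset //.
  apply/andP; split.
    by apply: contraNneq n02 => uv; rewrite E0 E2 uv addrKF2.
  by apply: contraNneq n13 => uu'; rewrite E1 E3 uu'.
by apply/ffunP => i; case: (ord4P i) => ->; rewrite ffunE /= ?E0 ?E1 ?E2 ?E3.
Qed.

Lemma check_cycles4E : cycles4 G :&: check_rooted _
  = [set square_walk xq.1 xq.2 | xq in setX [set: 'rV['F_2]_l] (Rset xs)].
Proof.
apply/setP => p; rewrite inE; apply/andP/imsetP => [[pC] | [[x q] /setXP[_ qR] ->]].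
  rewrite inE => /(check_cycle4_square_walk pC) [[x q] qR ->].
  by exists (x, q); rewrite // inE; apply/andP.
by split; [exact: square_walk_cycle | rewrite inE ffunE].
Qed.

Lemma card_check_cycles4 : #|cycles4 G :&: check_rooted _| = (2 ^ l * #|Rset xs|)%N.
Proof.
rewrite check_cycles4E card_in_imset ?cardsX ?cardsT ?card_mx ?card_Fp // ?mul1n //.
move=> [x [[u v] [u' v']]] [x' [[a b] [a' b']]] /setXP[_ +] /setXP[_ +] /ffunP Ew.
rewrite !inE /= => /and5P[_ _ _ _ /eqP E] /and5P[_ _ _ _ /eqP E'].
have := Ew o0; rewrite !ffunE /= => -[ex]; subst x'.
have := Ew o1; rewrite !ffunE /= => -[/addrI/xs_inj ea]; subst a.
have := Ew o2; rewrite !ffunE /= => -[/addrI/xs_inj eb]; subst b.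
have := Ew o3; rewrite !ffunE /= => -[/addrI/xs_inj ea']; subst a'.
by have /addrI/xs_inj -> : xs u' + xs v' = xs u' + xs b' by rewrite -E -E'.
Qed.

End Dyadic.

Theorem mainTheorem5 (l w : nat) (xs : 'I_w -> 'rV['F_2]_l) :
  (1 <= l)%N -> injective xs ->
  ((num_cycles (tanner_adj (dyadicD xs)) 4)%:R : rat)
    = (2 ^ l)%:R / 4 * (#|Rcset xs| + #|Rncset xs|)%:R
  /\ ((2 <= w)%N -> girth_is (tanner_adj (dyadicD xs)) 4).
Proof.
(* The counting argument works for every l. *)
move=> _ xs_inj; split.
  have := card_cycles4 (@tanner_adj_sym _ (dyadicD xs)).
  rewrite card_cycles4_tanner; last exact: dyadicD_sym.
  rewrite card_check_cycles4 // card_Rset mulnA => /(congr1 (fun n => n%:R : rat)).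
  by rewrite !natrM => E; apply: (@mulIf _ 8%:R) => //; rewrite mulrC -E; field.
move=> w_ge2; split.
  pose u0 : 'I_w := Ordinal (ltnW w_ge2); pose u1 : 'I_w := Ordinal w_ge2.
  exists (square_walk xs 0 ((u0, u1), (u1, u0))).
  by rewrite -inE square_walk_cycle // mem_Rset // addrC.
move=> k k_lt4 p; apply/negP => p_cycle.
have := tanner_cycle_even p_cycle.
case: k k_lt4 p p_cycle => [|[|[|[|//]]]] // _ p.
by rewrite (negbTE (no_2cycle _ p)).
Qed.
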